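(* Let $a\in\mathbb{B}^2$ and $T_a:\mathbb{B}^2\to\mathbb{B}^2$, $T_a(z)=\frac{z-a}{1-\overline{a}z}$. Then for each $d\in\{t,j^*,w,s,p,b_{\cdot,2}\}$, $$\sup_{x,y\in\mathbb{B}^2,\ x\ne y}\frac{d_{\mathbb{B}^2}(T_a(x),T_a(y))}{d_{\mathbb{B}^2}(x,y)}\ge1+|a|.$$
   Context: $\mathbb{B}^2$ is the unit disk in $\mathbb{C}$; $S^{1}(x,r)$ is the circle of center $x$ and radius $r$. For a domain $G\subsetneq\mathbb{R}^n$ and $x\in G$, $d_G(x)=\inf\{|x-z|:z\in\partial G\}$. Intrinsic (quasi-)metrics: $t_G(x,y)=\frac{|x-y|}{|x-y|+d_G(x)+d_G(y)}$; $j^*_G(x,y)=\frac{|x-y|}{|x-y|+2\min\{d_G(x),d_G(y)\}}$; $s_G(x,y)=\frac{|x-y|}{\inf_{z\in\partial G}(|x-z|+|z-y|)}$; $p_G(x,y)=\frac{|x-y|}{\sqrt{|x-y|^2+4d_G(x)d_G(y)}}$; $b_{G,2}(x,y)=\sup_{z\in\partial G}\frac{|x-y|}{(|x-z|^2+|z-y|^2)^{1/2}}$; for convex $G$, $w_G(x,y)=\frac{|x-y|}{\min\{\inf_{\tilde y\in\tilde Y}|x-\tilde y|,\ \inf_{\tilde x\in\tilde X}|y-\tilde x|\}}$ with $\tilde X=\{\tilde x\in S^{n-1}(x,2d_G(x)):(x+\tilde x)/2\in\partial G\}$, $\tilde Y=\{\tilde y\in S^{n-1}(y,2d_G(y)):(y+\tilde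 y)/2\in\partial G\}$. *)

From Stdlib Require Import Reals.
From Coquelicot Require Import Coquelicot.
Open Scope R_scope.

Definition inB (x : C) : Prop := Cmod x < 1.
Definition bdB (z : C) : Prop := Cmod z = 1.

Definition dB (x : C) : R :=
  real (Glb_Rbar (fun r => exists z, bdB z /\ r = Cmod (x - z)%C)).

Definition t_B (x y : C) : R :=
  Cmod (x - y)%C / (Cmod (x - y)%C + dB x + dB y).

Definition jstar_B (x y : C) : R :=
  Cmod (x - y)%C / (Cmod (x - y)%C + 2 * Rmin (dB x) (dB y)).

Definition s_B (x y : C) : R :=
  Cmod (x - y)%C /
  real (Glb_Rbar (fun r => exists z, bdB z /\ r = Cmod (x - z)%C + Cmod (z - y)%C)).

Definition p_B (x y : C) : R :=
  Cmod (x - y)%C / sqrt (Cmod (x - y)%C ^ 2 + 4 * dB x * dB y).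

Definition b2_B (x y : C) : R :=
  real (Lub_Rbar (fun r => exists z, bdB z /\
     r = Cmod (x - y)%C / sqrt (Cmod (x - z)%C ^ 2 + Cmod (z - y)%C ^ 2))).

Definition tildeSet (x : C) (u : C) : Prop :=
  Cmod (u - x)%C = 2 * dB x /\ bdB ((x + u) / 2)%C.

Definition w_B (x y : C) : R :=
  Cmod (x - y)%C /
  Rmin (real (Glb_Rbar (fun r => exists yt, tildeSet y yt /\ r = Cmod (x - yt)%C)))
       (real (Glb_Rbar (fun r => exists xt, tildeSet x xt /\ r = Cmod (y - xt)%C))).

Inductive metric_kind := Mt | Mjstar | Mw | Ms | Mp | Mb2.

Definition metric (k : metric_kind) : C -> C -> R :=
  match k with
  | Mt => t_B | Mjstar => jstar_B | Mw => w_B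
  | Ms => s_B | Mp => p_B | Mb2 => b2_B
  end.

Definition T (a z : C) : C := ((z - a) / (1 - Cconj a * z))%C.

From Stdlib Require Import Reals Lra Psatz.
From Coquelicot Require Import Coquelicot.
Open Scope R_scope.

(* Let al = |a| and let v be the unit vector with a = -al v.
   On the diameter through v the point c v (0 <= c < 1) is at distance 1 - c
   from the unit circle, and every infimum/supremum over the circle defining
   the six metrics is attained at v.  Hence on this ray each metric reads
   d(p v, q v) = (q - p) / den_k(q - p, 1 - p, 1 - q) with an explicit
   denominator den_k that is positively homogeneous of degree one.
   T_a preserves the ray, acting by the one-dimensional Möbius map
   s |-> (s + al)/(1 + al s).  For x = 0 and y = s v the image data
   (gap, boundary distances) is, up to a common factor, ((1+al) s, 1+al s, 1-s)
   instead of (s, 1, 1-s): the gap is stretched by 1 + al while the boundary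
   distances move by O(s).  One estimate on den_k then gives
   ratio >= (1 + al)/(1 + 3 s), and letting s be small proves the claim. *)

Lemma glb_attained (E : R -> Prop) (m : R) :
  (forall r, E r -> m <= r) -> E m -> real (Glb_Rbar E) = m.
Proof.
  intros Hlow Hm. rewrite (is_glb_Rbar_unique E m); [reflexivity|].
  split.
  - intros r Hr; apply Hlow; exact Hr.
  - intros b Hb; apply Hb; exact Hm.
Qed.

Lemma lub_attained (E : R -> Prop) (m : R) :
  (forall r, E r -> r <= m) -> E m -> real (Lub_Rbar E) = m.
Proof.
  intros Hup Hm. rewrite (is_lub_Rbar_unique E m); [reflexivity|].
  split.
  - intros r Hr; apply Hup; exact Hr.
  - intros b Hb; apply Hb; exact Hm.
Qed.

Lemma Cmod_sub_ge (x y : C) : Cmod x - Cmod y <= Cmod (x - y)%C.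
Proof.
  assert (Cmod x <= Cmod (x - y)%C + Cmod y).
  { replace x with ((x - y) + y)%C at 1 by ring. apply Cmod_triangle. }
  lra.
Qed.

Lemma Cmod_sym (x y : C) : Cmod (x - y)%C = Cmod (y - x)%C.
Proof. replace (y - x)%C with (- (x - y))%C by ring. now rewrite Cmod_opp. Qed.

Lemma dist_bd_ge (x z : C) : bdB z -> 1 - Cmod x <= Cmod (x - z)%C.
Proof.
  intro Hz. unfold bdB in Hz. rewrite Cmod_sym.
  pose proof (Cmod_sub_ge z x). lra.
Qed.

Lemma polar_neg (a : C) : exists v, Cmod v = 1 /\ a = (RtoC (- Cmod a) * v)%C.
Proof.
  destruct (Ceq_dec a 0) as [Ha0|Ha0].
  - exists 1%C. split; [apply Cmod_1|]. subst a. rewrite Cmod_0.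
    apply injective_projections; simpl; ring.
  - pose proof (proj1 (Cmod_gt_0 a) Ha0) as Hpos.
    exists (RtoC (- / Cmod a) * a)%C. split.
    + rewrite Cmod_mult, Cmod_R, Rabs_left1.
      * field. lra.
      * assert (0 < / Cmod a) by (apply Rinv_0_lt_compat; lra). lra.
    + rewrite Cmult_assoc, <- RtoC_mult.
      replace (- Cmod a * - / Cmod a) with 1 by (field; lra). ring.
Qed.

Section Ray.
Variable v : C.
Hypothesis Hv : Cmod v = 1.

Definition pt (c : R) : C := (RtoC c * v)%C.

Lemma pt_sub (p q : R) : Cmod (pt p - pt q)%C = Rabs (p - q).
Proof.
  unfold pt. replace (RtoC p * v - RtoC q * v)%C with (RtoC (p - q) * v)%C.
  - rewrite Cmod_mult, Cmod_R, Hv. ring.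
  - rewrite RtoC_minus. ring.
Qed.

Lemma pt_mod (c : R) : Cmod (pt c) = Rabs c.
Proof.
  replace (pt c) with (pt c - pt 0)%C by (unfold pt; ring).
  rewrite pt_sub. f_equal; ring.
Qed.

Lemma pt_1 : pt 1 = v.
Proof. unfold pt. ring. Qed.

Lemma dB_pt (c : R) : 0 <= c < 1 -> dB (pt c) = 1 - c.
Proof.
  intros Hc. apply glb_attained.
  - intros r [z [Hz ->]]. pose proof (dist_bd_ge (pt c) z Hz) as Hd.
    rewrite pt_mod, Rabs_pos_eq in Hd by lra. exact Hd.
  - exists v. split; [exact Hv|]. rewrite <- pt_1, pt_sub, Rabs_left1; lra.
Qed.

Lemma s_den_pt (p q : R) : 0 <= p < 1 -> 0 <= q < 1 ->
  real (Glb_Rbar (fun r => exists z, bdB z /\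
          r = Cmod (pt p - z)%C + Cmod (z - pt q)%C))
  = (1 - p) + (1 - q).
Proof.
  intros Hp Hq. apply glb_attained.
  - intros r [z [Hz ->]]. pose proof (dist_bd_ge (pt p) z Hz) as Hdp.
    pose proof (dist_bd_ge (pt q) z Hz) as Hdq.
    rewrite pt_mod, Rabs_pos_eq in Hdp, Hdq by lra. rewrite (Cmod_sym z). lra.
  - exists v. split; [exact Hv|]. rewrite <- pt_1, !pt_sub.
    rewrite Rabs_left1 by lra. rewrite Rabs_pos_eq by lra. ring.
Qed.

Lemma b2_pt (p q : R) : 0 <= p < 1 -> 0 <= q < 1 ->
  b2_B (pt p) (pt q) = Rabs (p - q) / sqrt ((1 - p) ^ 2 + (1 - q) ^ 2).
Proof.
  intros Hp Hq. apply lub_attained.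
  - intros r [z [Hz ->]]. pose proof (dist_bd_ge (pt p) z Hz) as Hdp.
    pose proof (dist_bd_ge (pt q) z Hz) as Hdq.
    rewrite pt_mod, Rabs_pos_eq in Hdp, Hdq by lra. rewrite (Cmod_sym z), pt_sub.
    unfold Rdiv. apply Rmult_le_compat_l; [apply Rabs_pos|].
    apply Rinv_le_contravar.
    + apply sqrt_lt_R0. nra.
    + apply sqrt_le_1_alt. nra.
  - exists v. split; [exact Hv|]. rewrite <- pt_1, !pt_sub.
    rewrite (Rabs_left1 (p - 1)) by lra. rewrite (Rabs_pos_eq (1 - q)) by lra.
    do 3 f_equal; ring.
Qed.

(* The infimum in w_B on the ray: the reflection of d v across the circle
   in the sense of tildeSet is (2 - d) v, which realises the minimum. *)
Lemma tilde_glb (c d : R) : 0 <= c < 1 -> 0 <= d < 1 ->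
  real (Glb_Rbar (fun r => exists yt, tildeSet (pt d) yt /\
          r = Cmod (pt c - yt)%C))
  = (1 - c) + (1 - d).
Proof.
  intros Hc Hd. apply glb_attained.
  - intros r [yt [[_ Hmid] ->]]. unfold bdB in Hmid.
    assert (Hsum : Cmod (pt d + yt)%C = 2).
    { replace (pt d + yt)%C with (RtoC 2 * ((pt d + yt) / 2))%C.
      - rewrite Cmod_mult, Hmid, Cmod_R, Rabs_pos_eq; lra.
      - field; intro E; injection E; lra. }
    pose proof (Cmod_sub_ge (pt d + yt)%C (pt d)) as Hyt.
    replace (pt d + yt - pt d)%C with yt in Hyt by ring.
    pose proof (Cmod_sub_ge yt (pt c)) as Hcy. rewrite Cmod_sym in Hcy.
    rewrite !pt_mod, !Rabs_pos_eq in * by lra. lra.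
  - exists (pt (2 - d)). split; [split|].
    + rewrite pt_sub, dB_pt by lra. rewrite Rabs_pos_eq; lra.
    + unfold bdB. replace ((pt d + pt (2 - d)) / 2)%C with v; [exact Hv|].
      unfold pt. rewrite RtoC_minus. field; intro E; injection E; lra.
    + rewrite pt_sub, Rabs_left1; lra.
Qed.

End Ray.

(* Denominator profile of each metric on a ray, as a function of the gap
   delta = q - p and the boundary distances d1 = 1 - p >= d2 = 1 - q.
   Since d1 = d2 + delta there, the j* denominator delta + 2 min(d1, d2)
   and the s and w denominators all equal d1 + d2. *)
Definition den (k : metric_kind) (delta d1 d2 : R) : R :=
  match k with
  | Mt => delta + d1 + d2
  | Mjstar | Mw | Ms => d1 + d2
  | Mp => sqrt (delta ^ 2 + 4 * d1 * d2)
  | Mb2 => sqrt (d1 ^ 2 + d2 ^ 2)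
  end.

Lemma metric_pt (v : C) (k : metric_kind) (p q : R) :
  Cmod v = 1 -> 0 <= p -> p < q -> q < 1 ->
  metric k (pt v p) (pt v q) = (q - p) / den k (q - p) (1 - p) (1 - q).
Proof.
  intros Hv Hp Hpq Hq.
  assert (Hgap : Rabs (p - q) = q - p) by (rewrite Rabs_left1; lra).
  destruct k; simpl.
  - unfold t_B. rewrite pt_sub, !dB_pt, Hgap by (auto; lra). reflexivity.
  - unfold jstar_B. rewrite pt_sub, !dB_pt, Hgap by (auto; lra).
    rewrite Rmin_right by lra. f_equal; ring.
  - unfold w_B. rewrite pt_sub, !tilde_glb, Hgap by (auto; lra).
    rewrite Rmin_left by lra. reflexivity.
  - unfold s_B. rewrite pt_sub, s_den_pt, Hgap by (auto; lra). reflexivity.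
  - unfold p_B. rewrite pt_sub, !dB_pt, Hgap by (auto; lra). reflexivity.
  - rewrite b2_pt, Hgap by (auto; lra). reflexivity.
Qed.

Lemma sqrt_sq_mul (c X : R) : 0 <= c -> sqrt (c ^ 2 * X) = c * sqrt X.
Proof.
  intros Hc. rewrite sqrt_mult_alt by apply pow2_ge_0.
  rewrite sqrt_pow2 by exact Hc. reflexivity.
Qed.

(* The denominator profiles are positively homogeneous of degree one,
   so the ray formula is invariant under a common rescaling of the data. *)
Lemma den_scale (k : metric_kind) (l delta d1 d2 : R) : 0 <= l ->
  den k (l * delta) (l * d1) (l * d2) = l * den k delta d1 d2.
Proof.
  intros Hl. destruct k; cbn [den]; try ring.
  - rewrite <- sqrt_sq_mul by exact Hl. f_equal; ring.
  - rewrite <- sqrt_sq_mul by exact Hl. f_equal; ring.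
Qed.

Lemma den_pos (k : metric_kind) (delta d1 d2 : R) :
  0 <= delta -> 0 < d1 -> 0 < d2 -> 0 < den k delta d1 d2.
Proof.
  intros Hdelta Hd1 Hd2.
  destruct k; cbn [den]; try lra; apply sqrt_lt_R0; nra.
Qed.

(* Key estimate: replacing the data (s, 1, 1 - s) of the segment [0, s v] by
   the rescaled image data ((1 + al) s, 1 + al s, 1 - s) enlarges each
   denominator by a factor of at most 1 + 3 s. *)
Lemma den_perturb (k : metric_kind) (al s : R) :
  0 <= al < 1 -> 0 < s <= 1/2 ->
  den k ((1 + al) * s) (1 + al * s) (1 - s) <= (1 + 3 * s) * den k s 1 (1 - s).
Proof.
  intros Hal Hs. assert (Hals : 0 <= al * s <= s) by nra.
  destruct k; cbn [den]; try nra.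
  - replace (s ^ 2 + 4 * 1 * (1 - s)) with ((2 - s) ^ 2) by ring.
    rewrite sqrt_pow2 by lra.
    apply Rle_trans with (2 - s + 2 * al * s); [|nra].
    rewrite <- (sqrt_pow2 (2 - s + 2 * al * s)) by nra.
    apply sqrt_le_1_alt. nra.
  - rewrite <- sqrt_sq_mul by lra. apply sqrt_le_1_alt. nra.
Qed.

(* T_a maps the diameter through v = -a/|a| to itself, acting on positions
   by the one-dimensional Möbius map s |-> (s + al)/(1 + al s). *)
Definition mob (al s : R) : R := (s + al) / (1 + al * s).

Lemma mob_range (al s : R) : 0 <= al < 1 -> 0 < s < 1 -> al < mob al s < 1.
Proof.
  intros Hal Hs. unfold mob. assert (HD : 0 < 1 + al * s) by nra.
  assert (Hgap : 0 < s * (1 - al * al)) by (apply Rmult_lt_0_compat; nra).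
  assert (Hbd : 0 < (1 - al) * (1 - s)) by (apply Rmult_lt_0_compat; lra).
  split; apply Rmult_lt_reg_r with (1 + al * s); try exact HD;
    unfold Rdiv; rewrite Rmult_assoc, Rinv_l by (apply Rgt_not_eq; exact HD);
    nra.
Qed.

Lemma T_pt (a v : C) (al s : R) : Cmod v = 1 -> a = (RtoC (- al) * v)%C ->
  0 <= al < 1 -> 0 <= s < 1 -> T a (pt v s) = pt v (mob al s).
Proof.
  intros Hv Ha Hal Hs. unfold T, pt, mob.
  assert (Hden : (1 - Cconj a * (RtoC s * v))%C = RtoC (1 + al * s)).
  { rewrite Ha.
    replace (Cconj (RtoC (- al) * v) * (RtoC s * v))%C
      with (RtoC (- al) * RtoC s * (v * Cconj v))%C
      by (apply injective_projections; simpl; ring).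
    rewrite <- Cmod2_conj, Hv. apply injective_projections; simpl; ring. }
  rewrite Hden, Ha, RtoC_div by nra.
  rewrite RtoC_plus, RtoC_plus, RtoC_mult, RtoC_opp. field.
  rewrite <- RtoC_mult, <- RtoC_plus. intro E. injection E. nra.
Qed.

(* The ratio of a metric along [0, s v] after and before T_a is at least
   (1 + al)/(1 + 3 s): after rescaling by (1 - al)/(1 + al s), the image
   data are ((1 + al) s, 1 + al s, 1 - s), so the ratio equals
   (1 + al) den(s, 1, 1 - s) / den((1 + al) s, 1 + al s, 1 - s). *)
Lemma ray_ratio (k : metric_kind) (al s : R) :
  0 <= al < 1 -> 0 < s <= 1/2 ->
  (1 + al) / (1 + 3 * s) <=
  ((mob al s - al) / den k (mob al s - al) (1 - al) (1 - mob al s))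
  / ((s - 0) / den k (s - 0) (1 - 0) (1 - s)).
Proof.
  intros Hal Hs. unfold mob.
  set (l := (1 - al) / (1 + al * s)).
  assert (Hl : 0 < l) by (unfold l; apply Rdiv_lt_0_compat; nra).
  replace ((s + al) / (1 + al * s) - al) with (l * ((1 + al) * s))
    by (unfold l; field; nra).
  replace (1 - al) with (l * (1 + al * s)) by (unfold l; field; nra).
  replace (1 - (s + al) / (1 + al * s)) with (l * (1 - s))
    by (unfold l; field; nra).
  rewrite den_scale by lra. rewrite !Rminus_0_r.
  pose proof (den_pos k ((1 + al) * s) (1 + al * s) (1 - s)) as Himg.
  pose proof (den_pos k s 1 (1 - s)) as Hpre.
  pose proof (den_perturb k al s Hal Hs) as Hest.
  set (D1 := den k ((1 + al) * s) (1 + al * s) (1 - s)) in *.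
  set (D0 := den k s 1 (1 - s)) in *.
  assert (HD1 : 0 < D1) by (apply Himg; nra).
  assert (HD0 : 0 < D0) by (apply Hpre; lra).
  replace (l * ((1 + al) * s) / (l * D1) / (s / D0)) with ((1 + al) * D0 / D1)
    by (field; repeat split; lra).
  apply Rmult_le_reg_r with ((1 + 3 * s) * D1); [nra|].
  replace ((1 + al) / (1 + 3 * s) * ((1 + 3 * s) * D1)) with ((1 + al) * D1)
    by (field; lra).
  replace ((1 + al) * D0 / D1 * ((1 + 3 * s) * D1))
    with ((1 + al) * ((1 + 3 * s) * D0)) by (field; lra).
  apply Rmult_le_compat_l; lra.
Qed.

Lemma small_step (al M : R) : 0 <= al < 1 -> M < 1 + al ->
  exists s, 0 < s <= 1/2 /\ M < (1 + al) / (1 + 3 * s).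
Proof.
  intros Hal HM. exists (Rmin (1/2) ((1 + al - M) / 8)).
  pose proof (Rmin_l (1/2) ((1 + al - M) / 8)).
  pose proof (Rmin_r (1/2) ((1 + al - M) / 8)).
  set (s := Rmin (1/2) ((1 + al - M) / 8)) in *.
  assert (Hs : 0 < s) by (unfold s; apply Rmin_glb_lt; lra).
  split; [lra|].
  apply Rmult_lt_reg_r with (1 + 3 * s); [lra|].
  replace ((1 + al) / (1 + 3 * s) * (1 + 3 * s)) with (1 + al) by (field; lra).
  destruct (Rle_lt_dec M 0); nra.
Qed.

Theorem lemma4p9 (a : C) (ha : inB a) (k : metric_kind) (M : R)
  (hM : M < 1 + Cmod a) :
  exists x y : C, inB x /\ inB y /\ x <> y /\
    metric k (T a x) (T a y) / metric k x y > M.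
Proof.
  destruct (polar_neg a) as [v [Hv Ha]].
  assert (Hal : 0 <= Cmod a < 1) by (split; [apply Cmod_ge_0 | exact ha]).
  set (al := Cmod a) in *.
  destruct (small_step al M Hal hM) as [s [Hs Hratio]].
  assert (Hmob0 : mob al 0 = al) by (unfold mob; field; lra).
  pose proof (mob_range al s Hal ltac:(lra)) as Hmobs.
  exists (pt v 0), (pt v s). split; [|split; [|split]].
  - unfold inB. rewrite pt_mod, Rabs_R0 by exact Hv. lra.
  - unfold inB. rewrite pt_mod, Rabs_pos_eq by (exact Hv || lra). lra.
  - intro E. apply (f_equal Cmod) in E.
    rewrite !pt_mod, Rabs_R0, Rabs_pos_eq in E by (exact Hv || lra). lra.
  - rewrite !(T_pt a v al) by (auto; lra). rewrite Hmob0.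
    rewrite !metric_pt by (auto; lra).
    pose proof (ray_ratio k al s Hal Hs). lra.
Qed.
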